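(* Let $R$ be a ring and let $(f_k)_{k\in\mathbb{Z}_{\geq 0}}$ be a sequence of elements of $R$ with $f_0=1$. For $s\in\mathbb{Z}_{\geq 0}$ and $0\le k\le s$, let $\nu_{s,k}\in\mathbb{Z}$ be the coefficient of $z^k$ in the Laurent polynomial $(z+z^{-1})^s\in\mathbb{Z}[z^{\pm1}]$. Suppose that for every $s\in\mathbb{Z}_{\geq0}$ we have $f_1^s=\sum_{k=0}^s \nu_{s,k}f_k$. Then $f_s=T_s(f_1)$ for all $s\geq 1$.
   Context: The Chebyshev polynomials of the first kind $T_k(z)\in\mathbb{Z}[z]$, $k\ge 0$, are defined by $T_0(z)=2$, $T_1(z)=z$, and $T_{k+1}(z)=zT_k(z)-T_{k-1}(z)$; equivalently $T_k(z+z^{-1})=z^k+z^{-k}$. *)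

From HB Require Import structures.
From mathcomp Require Import all_boot all_order all_algebra.
Set Implicit Arguments. Unset Strict Implicit. Unset Printing Implicit Defensive.
Import Order.TTheory GRing.Theory Num.Theory.
Local Open Scope ring_scope.

Fixpoint cheb (n : nat) : {poly int} :=
  match n with
  | 0%N => 2%:P
  | 1%N => 'X
  | (m.+1 as p).+1 => 'X * cheb p - cheb m
  end.

(* nu s k = coefficient of z^k in the Laurent polynomial (z + z^{-1})^s.
   Since z^s (z + z^{-1})^s = (z^2 + 1)^s, this is the coefficient of
   z^(s+k) in the ordinary polynomial (z^2+1)^s. *)
Definition nu (s k : nat) : int := ((('X ^+ 2 + 1) ^+ s : {poly int})`_(s + k)%N).

Definition evalZ (R : nzRingType) (p : {poly int}) (x : R) : R :=
  (map_poly (fun c : int => c%:~R) p).[x].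

(** The sequence [g] with [g 0 = 1] and [g k = T_k(x)] for [k >= 1] satisfies
    the hypothesis: multiplying [x = z + 1/z] by [z^k + z^-k] gives
    [z^(k+1) + z^-(k+1)] plus [z^(k-1) + z^-(k-1)], and the coefficients [nu]
    obey the matching Pascal-type recurrence [nu (s+1) (k+1) = nu s k + nu s (k+2)],
    with [nu (s+1) 0 = 2 nu s 1] by the symmetry of the binomial row.  Since
    [nu s s = 1], the hypothesis is a unitriangular system which determines
    [f s] from [f 0, ..., f (s-1)], so [f = g]. *)

From HB Require Import structures.
From mathcomp Require Import all_boot all_order all_algebra.
From mathcomp Require Import zify.
Import GRing.Theory.
Local Open Scope ring_scope.

Lemma unitriangular_eq (R : pzRingType) (c : nat -> nat -> R) (f g : nat -> R) :
    (forall s, c s s = 1) ->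
    (forall s, \sum_(k < s.+1) c s k * f k = \sum_(k < s.+1) c s k * g k) ->
  forall s, f s = g s.
Proof.
move=> c_diag sys; elim/ltn_ind => s IH.
have := sys s; rewrite !big_ord_recr /= c_diag !mul1r.
rewrite (eq_bigr (fun k : 'I_s => c s k * g k)) => [|k _]; last by rewrite IH.
exact: addrI.
Qed.

Section X2D1Powers.
Variable R : nzSemiRingType.

Lemma coefX2D1_expSS s i :
  (('X^2 + 1 : {poly R}) ^+ s.+1)`_i.+2 =
    (('X^2 + 1) ^+ s)`_i + (('X^2 + 1) ^+ s)`_i.+2.
Proof. by rewrite exprSr mulrDr mulr1 coefD coefMXn !ltnS ltn0 !subSS subn0. Qed.

Lemma coefX2D1_exp_gt s i : (2 * s < i)%N -> (('X^2 + 1 : {poly R}) ^+ s)`_i = 0.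
Proof.
move=> lt_2s_i; apply: nth_default; apply: leq_trans (size_exp_leq _ _) _.
by rewrite -polyC1 size_XnaddC.
Qed.

Lemma coefX2D1_exp_sym s i j :
  (i + j = 2 * s)%N -> (('X^2 + 1 : {poly R}) ^+ s)`_i = (('X^2 + 1) ^+ s)`_j.
Proof.
elim: s i j => [|s IH] i j sum_ij; first by have [-> ->] : i = 0%N /\ j = 0%N by lia.
have shift i' j' : (i' + j' = 2 * s.+1)%N ->
    ((('X^2 + 1 : {poly R}) ^+ s) * 'X^2)`_i' = (('X^2 + 1) ^+ s)`_j'.
  move=> sum_ij'; rewrite coefMXn; case: ltnP => [lt_i'2 | le2i'].
    by rewrite coefX2D1_exp_gt //; lia.
  by apply: IH; lia.
rewrite exprSr mulrDr mulr1 !coefD addrC.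
by congr (_ + _); [rewrite (shift j i) //; lia | rewrite (shift i j)].
Qed.

End X2D1Powers.

Lemma nu_gt s k : (s < k)%N -> nu s k = 0.
Proof. by move=> lt_sk; rewrite /nu coefX2D1_exp_gt //; lia. Qed.

Lemma nu_diag s : nu s s = 1.
Proof.
rewrite /nu; elim: s => [|s IH]; first by rewrite expr0 coef1.
rewrite addSn addnS coefX2D1_expSS IH coefX2D1_exp_gt ?addr0 //; lia.
Qed.

Lemma nuSS s k : nu s.+1 k.+1 = nu s k + nu s k.+2.
Proof. by rewrite /nu addSn -addSnnS addSn coefX2D1_expSS !addnS. Qed.

Lemma nuS0 s : nu s.+1 0 = nu s 1 *+ 2.
Proof.
rewrite /nu; case: s => [|s]; first by rewrite expr1 !coefD coefXn coef1.
rewrite addn0 coefX2D1_expSS (@coefX2D1_exp_sym _ _ s s.+2); last lia.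
by rewrite addn1.
Qed.

Lemma sum_nu_split2 (R : pzRingType) s (F : nat -> R) :
  \sum_(k < s.+1) (nu s k)%:~R * F k =
    (nu s 0)%:~R * F 0%N + (nu s 1)%:~R * F 1%N
    + \sum_(k < s.+1) (nu s k.+2)%:~R * F k.+2.
Proof.
rewrite (big_ord_widen s.+3 (fun k => (nu s k)%:~R * F k) (leqW (leqnSn s.+1))).
rewrite big_mkcond (eq_bigr (fun k : 'I_s.+3 => (nu s k)%:~R * F k)) => [|k _].
  by rewrite 2!big_ord_recl /= addrA.
by case: ltnP => // le_s_k; rewrite nu_gt ?mul0r.
Qed.

Section ChebyshevExpansion.
Variables (R : nzRingType) (x : R).

Lemma evalZ_cheb0 : evalZ (cheb 0) x = 2%:R.
Proof. by rewrite /evalZ /= map_polyC hornerC. Qed.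

Lemma evalZ_cheb1 : evalZ (cheb 1) x = x.
Proof. by rewrite /evalZ /= map_polyX hornerX. Qed.

Lemma evalZ_chebSS k :
  evalZ (cheb k.+2) x = evalZ (cheb k.+1) x * x - evalZ (cheb k) x.
Proof.
have -> : cheb k.+2 = 'X * cheb k.+1 - cheb k by [].
rewrite /evalZ; move: (cheb k.+1) (cheb k) => p q.
by rewrite rmorphB rmorphM /= map_polyX -commr_polyX hornerD hornerN hornerMX.
Qed.

(* [T_0 = 2] is replaced by [1], the value prescribed for [f 0]. *)
Definition cheb_basis k := if k is 0%N then 1 else evalZ (cheb k) x.
Arguments cheb_basis : simpl never.

Lemma cheb_basis0_mulx : cheb_basis 0 * x = cheb_basis 1.
Proof. by rewrite /cheb_basis mul1r evalZ_cheb1. Qed.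

Lemma cheb_basis1_mulx : cheb_basis 1 * x = cheb_basis 2 + cheb_basis 0 *+ 2.
Proof.
by rewrite -[cheb_basis 2]/(evalZ (cheb 2) x) evalZ_chebSS evalZ_cheb0 subrK.
Qed.

Lemma cheb_basisSS_mulx k : cheb_basis k.+2 * x = cheb_basis k.+3 + cheb_basis k.+1.
Proof. by rewrite -[cheb_basis k.+3]/(evalZ (cheb k.+3) x) evalZ_chebSS subrK. Qed.

Lemma expr_cheb_basis s : x ^+ s = \sum_(k < s.+1) (nu s k)%:~R * cheb_basis k.
Proof.
elim: s => [|s IH]; first by rewrite big_ord1 nu_diag mul1r.
rewrite exprSr IH sum_nu_split2 !mulrDl mulr_suml -!mulrA.
rewrite cheb_basis0_mulx cheb_basis1_mulx.
under eq_bigr do rewrite -mulrA cheb_basisSS_mulx mulrDr.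
rewrite [RHS]big_ord_recl nuS0.
under [X in _ = _ + X]eq_bigr => k _ do rewrite lift0 nuSS intrD mulrDl.
rewrite !big_split /= (sum_nu_split2 _ s (fun k => cheb_basis k.+1)) /=.
rewrite raddfMn /= mulrnAl mulrDr mulrnAr.
(* Made opaque, as [addrA] would otherwise unfold [_ *+ 2] into a sum. *)
set t := (nu s 1)%:~R * cheb_basis 0 *+ 2; clearbody t.
by rewrite !addrA; congr (_ + _ + _); rewrite addrC addrA.
Qed.

End ChebyshevExpansion.

Theorem lemma4p5 (R : nzRingType) (f : nat -> R) (hf0 : f 0%N = 1)
  (hpow : forall s : nat,
      f 1%N ^+ s = \sum_(k < s.+1) (nu s k)%:~R * f k) :
  forall s : nat, (1 <= s)%N -> f s = evalZ (cheb s) (f 1%N).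
Proof.
(* [hf0] is the case [s = 0] of [hpow]. *)
have f_eq : forall s, f s = cheb_basis _ (f 1%N) s.
  apply: (@unitriangular_eq _ (fun s k => (nu s k)%:~R)) => s.
    by rewrite nu_diag.
  by rewrite -hpow -expr_cheb_basis.
by case=> // s _; rewrite f_eq.
Qed.
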